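(* Suppose Assumptions A.1, A.2 and A.3 (stated in the context) hold. Then the constraint matrix of the linear recourse polyhedron $P$ is totally unimodular. Every entry of this matrix lies in $\{0,\pm1\}$, and every determinant of one of its square submatrices lies in $\{0,\pm1\}$.
   Context: Fix $d \ge 1$. The decision variables are $\mathbf{x}=(x_1,\dots,x_d)$, representing an individual, and $\mathbf{a}=(a_1,\dots,a_d)$, representing an action, with $(\mathbf{x},\mathbf{a})\in\mathbb{R}^{2d}$. For a feature index $j\in[d]$, a *feature term* $v_j$ denotes one of $x_j$, $a_j$ or $x_j+a_j$. The choice may differ from constraint to constraint. A *linear recourse constraint* is a linear inequality of one of the following three types. (i) An *integer bound constraint* $L_j\le v_j$ or $v_j\le U_j$, where $L_j,U_j\in\mathbb{Z}$. (ii) A *$K$-hot constraint* $\sum_{j\in J_i} s_{ij}\, v_j\le K_i$, where $J_i\subseteq[d]$, each $s_{ij}\in\{+1,-1\}$, and $K_i\in\mathbb{Z}$. (iii) A *(unit) directional linkage constraint* $v_j\le v_k$, where $j,k\in[d]$. The feature space $\mathcal{X}$, the region of interest $\mathcal{R}$, the box $B(\mathbf{u},\mathbf{l})=\{\mathbf{x}:\mathbf{l}\le\mathbf{x}\le\mathbf{u}\}$ with $\mathbf{u},\mathbf{l}\in\mathbb{Z}^d$, and the action set $A(\mathbf{x})$ are all assumed to be described by finitely many linear recourse constraints. The *linear recourse polyhedron* $P\subseteq\mathbb{R}^{2d}$ is the set of all $(\mathbf{x},\mathbf{a})$ satisfying all of these constraints, namely $\mathbf{x}+\mathbf{a}\in\mathcal{X}$,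 $\mathbf{x}\in\mathcal{R}$, $\mathbf{x}\in B(\mathbf{u},\mathbf{l})$ and $\mathbf{a}\in A(\mathbf{x})$. Let $\mathcal{J}=\{J_i\}$ be the family of index sets of the $K$-hot constraints. The *implication graph* is the undirected graph with one node $n_j$ for each $j\in[d]$ and an edge between $n_j$ and $n_k$ whenever some directional linkage constraint acts on features $j$ and $k$. Assumption A.1: no feature index appears in more than one $K$-hot constraint, i.e. $J_i\cap J_k=\emptyset$ for all distinct $J_i,J_k\in\mathcal{J}$. Assumption A.2: each connected component of the implication graph contains at most one node $n_j$ with $j\in\bigcup_{J_i\in\mathcal{J}}J_i$. Assumption A.3: the implication graph is acyclic. *)

From HB Require Import structures.
From mathcomp Require Import all_boot all_order all_algebra.
Set Implicit Arguments. Unset Strict Implicit. Unset Printing Implicit Defensive.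
Import Order.TTheory GRing.Theory Num.Theory.
Local Open Scope ring_scope.

(* Variables are (x, a) in R^(2d); column c of the constraint matrix:
   lshift d j  <-> x_j,   rshift d j <-> a_j. *)

(* A feature term v_j : x_j, a_j or x_j + a_j. *)
Inductive fterm := TX | TA | TXA.

Definition term_vec (d : nat) (j : 'I_d) (t : fterm) : 'rV[int]_(d + d) :=
  \row_(c < d + d)
    ((if (c == lshift d j) && (if t is TA then false else true) then 1 else 0) +
     (if (c == rshift d j) && (if t is TX then false else true) then 1 else 0)).

Inductive lr_constraint (d : nat) :=
  | UpperB of 'I_d & fterm & int
  | LowerB of 'I_d & fterm & int
  | KHot of {set 'I_d} & ('I_d -> fterm) & ('I_d -> bool) & int
      (* KHot J t s K :  sum_(j in J) s_j v_j <= K, with v_j the term t j and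
         s_j = +1 if s j, -1 otherwise *)
  | Link of 'I_d & fterm & 'I_d & fterm.                  (* v_j <= v_k *)

(* The row of the constraint in the form  row * (x, a)^T <= rhs. *)
Definition constraint_row (d : nat) (c : lr_constraint d) : 'rV[int]_(d + d) :=
  match c with
  | UpperB j t _ => term_vec j t
  | LowerB j t _ => - term_vec j t
  | KHot J t s _ => \sum_(j in J) (if s j then 1 else -1) *: term_vec j (t j)
  | Link j tj k tk => term_vec j tj - term_vec k tk
  end.

Definition constraint_matrix (d m : nat) (cs : 'I_m -> lr_constraint d)
  : 'M[int]_(m, d + d) :=
  \matrix_(i < m) constraint_row (cs i).

Definition khot_set (d : nat) (c : lr_constraint d) : option {set 'I_d} :=
  match c with KHot J _ _ _ => Some J | _ => None end.

Definition assumption_A1 (d m : nat) (cs : 'I_m -> lr_constraint d) : Prop :=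
  forall p q (Jp Jq : {set 'I_d}), p != q ->
    khot_set (cs p) = Some Jp -> khot_set (cs q) = Some Jq -> Jp :&: Jq = set0.

Definition in_khot_union (d m : nat) (cs : 'I_m -> lr_constraint d) (j : 'I_d)
  : bool :=
  [exists p, if khot_set (cs p) is Some J then j \in J else false].

(* Implication graph: every directional linkage constraint acting on features
   j and k is an (undirected) edge between n_j and n_k. *)
Definition link_joins (d : nat) (c : lr_constraint d) (u v : 'I_d) : bool :=
  match c with
  | Link j _ k _ => ((j == u) && (k == v)) || ((j == v) && (k == u))
  | _ => false
  end.

Definition impl_adj (d m : nat) (cs : 'I_m -> lr_constraint d) : rel 'I_d :=
  fun u v => [exists p, link_joins (cs p) u v].

Definition assumption_A2 (d m : nat) (cs : 'I_m -> lr_constraint d) : Prop :=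
  forall u v : 'I_d, in_khot_union cs u -> in_khot_union cs v ->
    connect (impl_adj cs) u v -> u = v.

(* A cycle in the implication graph (as a multigraph with one edge per
   linkage constraint): n+1 distinct edges (constraints) and n+1 distinct
   nodes v_0, ..., v_n with edge e_i joining v_i and v_(i+1 mod n+1).
   (n = 0: self-loop; n = 1: two parallel edges.) *)
Definition impl_has_cycle (d m : nat) (cs : 'I_m -> lr_constraint d) : Prop :=
  exists (n : nat) (e : 'I_n.+1 -> 'I_m) (v : 'I_n.+1 -> 'I_d),
    [/\ injective e, injective v &
        forall i : 'I_n.+1, link_joins (cs (e i)) (v i) (v (ordS i))].

Definition assumption_A3 (d m : nat) (cs : 'I_m -> lr_constraint d) : Prop :=
  ~ impl_has_cycle cs.

Definition totally_unimodular (m n : nat) (A : 'M[int]_(m, n)) : Prop :=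
  forall (k : nat) (f : 'I_k -> 'I_m) (g : 'I_k -> 'I_n),
    injective f -> injective g -> \det (mxsub f g A) \in [:: 0; 1; -1].

From HB Require Import structures.
From mathcomp Require Import all_boot all_order all_algebra.
From mathcomp Require Import zify.
From Stdlib Require Import Classical.

Set Implicit Arguments. Unset Strict Implicit. Unset Printing Implicit Defensive.
Import Order.TTheory GRing.Theory Num.Theory.
Local Open Scope ring_scope.

(* Induction on the size of a square submatrix [S]: every minor of [S] is in
   {0, 1, -1}, so it suffices to expand [\det S] along a row or column with a
   single nonzero entry.  If no row has one, group the columns of [S] by
   feature (the columns of [x_p] and [a_p]).  The linkage rows joining
   features form a forest (A3) each tree of which contains at most one feature
   of a K-hot set (A2), and that feature lies in a single K-hot row (A1); so
   some feature [p] is a leaf: apart from one row [r0], every row meeting a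
   column of [p] meets no other feature.  Such a row has equal
   entries in the columns of [x_p] and [a_p], so subtracting one of these
   columns from the other leaves a column whose only nonzero entry is in [r0]. *)

Definition zpm1 (x : int) : bool := x \in [:: 0; 1; -1].

Lemma zpm1M x y : zpm1 x -> zpm1 y -> zpm1 (x * y).
Proof. by rewrite /zpm1 !inE => /or3P[] /eqP-> /or3P[] /eqP->. Qed.

Lemma zpm1_sign n : zpm1 ((-1) ^+ n).
Proof. by rewrite /zpm1 -signr_odd; case: (odd n). Qed.

Lemma zpm1B x y : zpm1 x -> zpm1 y -> (x != 0 -> y != 0 -> x = y) -> zpm1 (y - x).
Proof. by rewrite /zpm1 !inE => /or3P[] /eqP-> /or3P[] /eqP-> //= /(_ isT isT). Qed.

Section DetExpansion.
Variables (R : comPzRingType) (k : nat) (M : 'M[R]_k.+1).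

Lemma expand_det_row1 i0 j0 :
  (forall j, j != j0 -> M i0 j = 0) -> \det M = M i0 j0 * cofactor M i0 j0.
Proof.
move=> M0; rewrite (expand_det_row _ i0) (bigD1 j0) //= big1 ?addr0 //.
by move=> j /M0->; rewrite mul0r.
Qed.

Lemma expand_det_col1 i0 j0 :
  (forall i, i != i0 -> M i j0 = 0) -> \det M = M i0 j0 * cofactor M i0 j0.
Proof.
move=> M0; rewrite (expand_det_col _ j0) (bigD1 i0) //= big1 ?addr0 //.
by move=> i /M0->; rewrite mul0r.
Qed.

(* Subtracting column [cx] from column [ca] leaves [\det M] unchanged (the
   expansion of [cx] along the cofactors of [ca] vanishes); then expand along [ca]. *)
Lemma expand_det_col_pair r0 cx ca : cx != ca ->
  (forall i, i != r0 -> M i ca = M i cx) ->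
  \det M = (M r0 ca - M r0 cx) * cofactor M r0 ca.
Proof.
move=> cx_ca Mca.
have alien : \sum_i M i cx * cofactor M i ca = 0.
  transitivity ((\adj M *m M) ca cx).
    by rewrite mxE; apply: eq_bigr => i _; rewrite mxE mulrC.
  by rewrite mul_adj_mx mxE eq_sym (negbTE cx_ca) mulr0n.
rewrite (expand_det_col _ ca) -[X in X = _]subr0 -{2}alien -sumrB.
rewrite (bigD1 r0) //= big1 ?addr0 ?mulrBl // => i /Mca->.
by rewrite -mulrBl subrr mul0r.
Qed.

End DetExpansion.

Lemma minor_mxsub (T : Type) k m n (f : 'I_k.+1 -> 'I_m) (g : 'I_k.+1 -> 'I_n)
    (A : 'M[T]_(m, n)) i j :
  row' i (col' j (mxsub f g A)) = mxsub (f \o lift i) (g \o lift j) A.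
Proof. by apply/matrixP => a b; rewrite !mxE. Qed.

Section ConstraintEntries.
Variable d : nat.

Definition col_feature (c : 'I_(d + d)) : 'I_d :=
  match split c with inl j | inr j => j end.

Definition x_coef (t : fterm) : int := if t is TA then 0 else 1.
Definition a_coef (t : fterm) : int := if t is TX then 0 else 1.

Definition col_coef (c : 'I_(d + d)) : fterm -> int :=
  if split c is inl _ then x_coef else a_coef.

Lemma col_feature_lshift p : col_feature (lshift d p) = p.
Proof. by rewrite /col_feature (unsplitK (inl _ p)). Qed.

Lemma col_feature_rshift p : col_feature (rshift d p) = p.
Proof. by rewrite /col_feature (unsplitK (inr _ p)). Qed.

Lemma col_coef_lshift p : col_coef (lshift d p) = x_coef.
Proof. by rewrite /col_coef (unsplitK (inl _ p)). Qed.

Lemma col_coef_rshift p : col_coef (rshift d p) = a_coef.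
Proof. by rewrite /col_coef (unsplitK (inr _ p)). Qed.

Lemma lrshift_col_feature c :
  c = lshift d (col_feature c) \/ c = rshift d (col_feature c).
Proof. by rewrite /col_feature -{1 3}(splitK c); case: (split c) => j; [left|right]. Qed.

Lemma col_coef01 c t : col_coef c t = 0 \/ col_coef c t = 1.
Proof. by rewrite /col_coef; case: (split c); case: t; auto. Qed.

(* [feature_coef x_coef c p] and [feature_coef a_coef c p] are the entries of
   the row of [c] in the columns of [x_p] and [a_p] (see [constraint_rowE]). *)
Definition feature_coef (sel : fterm -> int) (c : lr_constraint d) (p : 'I_d) : int :=
  match c with
  | UpperB j t _ => if j == p then sel t else 0
  | LowerB j t _ => - (if j == p then sel t else 0)
  | KHot J t s _ => if p \in J then (if s p then 1 else -1) * sel (t p) else 0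
  | Link j tj k tk => (if j == p then sel tj else 0) - (if k == p then sel tk else 0)
  end.

Lemma term_vecE j t c :
  term_vec j t 0 c = if j == col_feature c then col_coef c t else 0.
Proof.
rewrite /term_vec mxE; case: (lrshift_col_feature c) => ->;
  rewrite ?col_feature_lshift ?col_feature_rshift ?col_coef_lshift ?col_coef_rshift.
  by rewrite eq_lshift eq_lrshift /= eq_sym; case: (_ == _); case: t.
by rewrite eq_rshift eq_rlshift /= eq_sym; case: (_ == _); case: t.
Qed.

Lemma constraint_rowE c col :
  constraint_row c 0 col = feature_coef (col_coef col) c (col_feature col).
Proof.
case: c => [j t K|j t K|J t s K|j tj k tk] /=.
- by rewrite term_vecE.
- by rewrite mxE term_vecE.
- rewrite summxE; under eq_bigr do rewrite mxE term_vecE.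
  case: ifP => pJ; last first.
    apply: big1 => j jJ; case: eqP => [ej|_]; last by rewrite mulr0.
    by rewrite -ej jJ in pJ.
  rewrite (bigD1 (col_feature col)) //= eqxx big1 ?addr0 // => j /andP[_ /negbTE->].
  by rewrite mulr0.
- by rewrite -!term_vecE !mxE.
Qed.

Lemma constraint_matrixE m (cs : 'I_m -> lr_constraint d) i col :
  constraint_matrix cs i col = feature_coef (col_coef col) (cs i) (col_feature col).
Proof. by rewrite mxE constraint_rowE. Qed.

Definition involves (c : lr_constraint d) (p : 'I_d) : bool :=
  match c with
  | UpperB j _ _ | LowerB j _ _ => j == p
  | KHot J _ _ _ => p \in J
  | Link j _ k _ => (j == p) || (k == p)
  end.

Lemma feature_coef_zpm1 col c p : zpm1 (feature_coef (col_coef col) c p).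
Proof.
rewrite /zpm1; have s01 := col_coef01 col.
case: c => [j t K|j t K|J t s K|j tj k tk] /=.
- by case: (j == p) => //; case: (s01 t) => ->.
- by case: (j == p) => //; case: (s01 t) => ->.
- by case: (p \in J) => //; case: (s p); case: (s01 (t p)) => ->.
- by case: (s01 tj) => ->; case: (s01 tk) => ->; case: (j == p); case: (k == p).
Qed.

Lemma feature_coef_involves sel c p : feature_coef sel c p != 0 -> involves c p.
Proof.
case: c => [j t K|j t K|J t s K|j tj k tk] /=.
- by case: (j == p); rewrite ?eqxx.
- by case: (j == p); rewrite ?oppr0 ?eqxx.
- by case: (p \in J); rewrite ?eqxx.
- by case: (j == p); case: (k == p); rewrite ?subrr ?eqxx.
Qed.

(* Only a linkage [v_p <= v_p] could give [x_p] and [a_p] different nonzero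
   coefficients. *)
Lemma feature_coef_xa c p :
  (if c is Link j _ k _ then j != k else true) ->
  feature_coef x_coef c p != 0 -> feature_coef a_coef c p != 0 ->
  feature_coef x_coef c p = feature_coef a_coef c p.
Proof.
case: c => [j t K|j t K|J t s K|j tj k tk] /=.
- by case: (j == p) => //; case: t.
- by case: (j == p) => //; case: t.
- by move=> _; case: (p \in J) => //; case: (s p); case: (t p).
- move=> jk; case: (j =P p) => [ej|_]; case: (k =P p) => [ek|_] //.
  + by move: jk; rewrite ej ek eqxx.
  + by case: tj.
  + by case: tk.
Qed.

End ConstraintEntries.

Section ImplicationGraph.
Variables (d m : nat) (cs : 'I_m -> lr_constraint d).

Lemma link_joins_ends (c : lr_constraint d) u v u' v' :
  link_joins c u v -> link_joins c u' v' -> (u = u' /\ v = v') \/ (u = v' /\ v = u').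
Proof.
case: c => // j tj k tk /=.
by case/orP=> /andP[/eqP<- /eqP<-]; case/orP=> /andP[/eqP<- /eqP<-]; tauto.
Qed.

Lemma link_irrefl : assumption_A3 cs ->
  forall p, if cs p is Link j _ k _ then j != k else true.
Proof.
move=> noCycle p; case E: (cs p) => [||| j tj k tk] //.
apply/eqP => ejk; apply: noCycle; exists 0%N, (fun=> p), (fun=> j).
split=> [a b _|a b _|i]; rewrite ?(ord1 a) ?(ord1 b) //.
by rewrite E /= ejk eqxx.
Qed.

(* The edges of the cycle are distinct because its vertices are, except when
   [L = 1], where the closing edge could be the walk's only edge. *)
Lemma closed_walk_cycle (L : nat) (W : nat -> 'I_d) (F : nat -> 'I_m) (en : 'I_m) :
  (forall a b, (a <= L)%N -> (b <= L)%N -> W a = W b -> a = b) ->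
  (forall a, (a < L)%N -> link_joins (cs (F a)) (W a) (W a.+1)) ->
  link_joins (cs en) (W L) (W 0%N) ->
  (L = 1%N -> en <> F 0%N) -> impl_has_cycle cs.
Proof.
move=> Winj FW enW en_F0.
exists L, (fun i : 'I_L.+1 => if (i < L)%N then F i else en), (fun i => W i).
split.
- move=> a b /=; have aL := ltn_ord a; have bL := ltn_ord b.
  wlog ab : a b aL bL / (a <= b)%N.
    move=> Hw E; case: (leqP a b) => H; first exact: Hw.
    by apply/esym; apply: (Hw b a bL aL (ltnW H)); rewrite E.
  case: (ltnP a L) => aL'; case: (ltnP b L) => bL' E.
  + have := FW a aL'; rewrite E => Fa.
    case: (link_joins_ends Fa (FW b bL')) => [[E1 _]|[E1 E2]].
      by apply/val_inj/Winj => //; lia.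
    have := Winj _ _ (ltnW aL') bL' E1; have := Winj _ _ aL' (ltnW bL') E2; lia.
  + have := FW a aL'; rewrite E => Fa.
    case: (link_joins_ends Fa enW) => [[E1 _]|[E1 E2]].
      by have := Winj _ _ (ltnW aL') (leqnn L) E1; lia.
    have E3 := Winj _ _ (ltnW aL') (leq0n L) E1.
    have E4 := Winj _ _ aL' (leqnn L) E2.
    by exfalso; apply: en_F0; [rewrite -E4 E3 | rewrite -E E3].
  + lia.
  + by apply/val_inj => /=; lia.
- move=> a b /= E; apply/val_inj/Winj => //; rewrite -ltnS; exact: ltn_ord.
- move=> i /=; have iL := ltn_ord i; case: (ltnP i L) => iL'.
  + by rewrite /= modn_small ?ltnS //; apply: FW.
  + have -> : nat_of_ord i = L by apply/eqP; rewrite eqn_leq iL' -ltnS iL.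
    by rewrite /= modnn.
Qed.

Section Walks.
Variables (I : finType) (e : I -> 'I_m) (P : pred 'I_d).
Hypothesis e_inj : injective e.

Definition simple_walk n (V : nat -> 'I_d) (E : nat -> I) :=
  [/\ forall s, (s < n)%N -> link_joins (cs (e (E s))) (V s) (V s.+1),
      forall a b, (a <= n)%N -> (b <= n)%N -> V a = V b -> a = b &
      forall s, (s <= n)%N -> P (V s)].

Lemma simple_walk_size n V E : simple_walk n V E -> (n < d)%N.
Proof.
case=> _ Vinj _; have inj : injective (fun a : 'I_n.+1 => V a).
  by move=> a b /Vinj ab; apply/val_inj/ab; rewrite -ltnS.
by have := leq_card _ inj; rewrite !card_ord.
Qed.

Lemma simple_walk_connect n V E : simple_walk n V E ->
  forall s, (s <= n)%N -> connect (impl_adj cs) (V 0%N) (V s).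
Proof.
case=> VE _ _; elim=> [|s IH] sn; first exact: connect0.
apply: connect_trans (IH (ltnW sn)) (connect1 _).
by apply/existsP; exists (e (E s)); apply: VE.
Qed.

(* In an acyclic graph a walk that never backtracks stays simple. *)
Lemma simple_walk_extend n V E i w : assumption_A3 cs ->
  simple_walk n V E -> link_joins (cs (e i)) (V n) w -> P w ->
  ((0 < n)%N -> i <> E n.-1) ->
  exists V' E', simple_walk n.+1 V' E' /\ V' 0%N = V 0%N.
Proof.
move=> noCycle [VE Vinj PV] iVw Pw no_back.
case: (boolP [exists t : 'I_n.+1, V t == w]) => [/existsP[t /eqP Vt]|fresh].
  have tn : (t <= n)%N by rewrite -ltnS.
  case: noCycle.
  apply: (@closed_walk_cycle (n - t) (fun a => V (t + a)%N)
            (fun a => e (E (t + a)%N)) (e i)).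
  - by move=> a b ? ? /Vinj; lia.
  - by move=> a ?; rewrite addnS; apply: VE; lia.
  - by rewrite addn0 subnKC // Vt.
  - move=> nt /e_inj; rewrite addn0 => iE; apply: no_back; first lia.
    by rewrite iE; congr E; lia.
exists (fun s => if s == n.+1 then w else V s), (fun s => if s == n then i else E s).
split=> //; split.
- move=> s sn; case: (ltngtP s n) => [sn'|ns|->]; [|lia|by rewrite !eqxx ifF //; lia].
  have [-> ->] : (s == n.+1) = false /\ (s.+1 == n.+1) = false by split; lia.
  exact: VE.
- have Vw b : (b <= n)%N -> V b <> w.
    move=> bn Vb; move/negP: fresh; apply; apply/existsP.
    by exists (Ordinal (n:=n.+1) (m:=b) (ltac:(lia))); rewrite /= Vb.
  move=> a b an bn; case: (a =P n.+1) => ea; case: (b =P n.+1) => eb.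
  + by rewrite ea eb.
  + by move/esym/Vw; lia.
  + by move/Vw; lia.
  + by apply: Vinj; lia.
- by move=> s sn; case: (s =P n.+1) => // sn1; apply: PV; lia.
Qed.

End Walks.
End ImplicationGraph.

Section Submatrix.
Variables (d m : nat) (cs : 'I_m -> lr_constraint d).
Hypotheses (A1 : assumption_A1 cs) (A2 : assumption_A2 cs) (A3 : assumption_A3 cs).
Variables (k : nat) (f : 'I_k.+1 -> 'I_m) (g : 'I_k.+1 -> 'I_(d + d)).
Hypotheses (f_inj : injective f) (g_inj : injective g).

Local Notation S := (mxsub f g (constraint_matrix cs)).
Local Notation feat c := (col_feature (g c)).

Definition chosen_feature (p : 'I_d) : bool := [exists c, feat c == p].

Definition crosses i p :=
  (exists c, feat c = p /\ S i c != 0) /\ (exists c, feat c != p /\ S i c != 0).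

Definition leaf p r0 := chosen_feature p /\ forall i, i != r0 -> ~ crosses i p.

Lemma submatrixE i c : S i c = feature_coef (col_coef (g c)) (cs (f i)) (feat c).
Proof. by rewrite mxE constraint_matrixE. Qed.

Lemma crosses_cases i p : crosses i p ->
  (exists2 J, khot_set (cs (f i)) = Some J & p \in J) \/
  (exists q, chosen_feature q /\ link_joins (cs (f i)) p q).
Proof.
move=> [[c [cp Sc]] [c' [c'p Sc']]]; rewrite !submatrixE in Sc Sc'.
have chosen_c' : chosen_feature (feat c') by apply/existsP; exists c'.
move: (feature_coef_involves Sc) (feature_coef_involves Sc') chosen_c' c'p.
rewrite cp; move: (feat c') => q.
case: (cs (f i)) => [j t K|j t K|J t s K|j tj k' tk] /=.
- by move=> /eqP-> /eqP->; rewrite eqxx.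
- by move=> /eqP-> /eqP->; rewrite eqxx.
- by move=> pJ _ _ _; left; exists J.
- move=> /orP[] /eqP ep /orP[] /eqP eq chosen_q qp; right; exists q; split=> //;
    by move: qp; rewrite -ep -eq ?eqxx ?orbT.
Qed.

(* If no chosen feature were a leaf, one could walk forever in the implication
   graph without backtracking: every chosen feature crosses two rows, at most
   one of them a K-hot row (A1), and the walk may only stop at a feature of a
   K-hot set, which (A2) cannot be reached from the start when the start is
   taken in a K-hot set.  Acyclicity (A3) keeps the walk simple, so it would
   visit more than [d] features. *)
Lemma exists_leaf : exists p r0, leaf p r0.
Proof.
apply: NNPP => no_leaf.
have crossed_twice p r0 : chosen_feature p -> exists2 i, i != r0 & crosses i p.
  move=> chosen_p; apply: NNPP => none; apply: no_leaf; exists p, r0.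
  by split=> // i ir0 ip; apply: none; exists i.
have khot_once i1 i2 p J1 J2 : i1 != i2 ->
    khot_set (cs (f i1)) = Some J1 -> p \in J1 ->
    khot_set (cs (f i2)) = Some J2 -> p \in J2 -> False.
  move=> i12 E1 pJ1 E2 pJ2; have f12 : f i1 != f i2 by apply: contra i12 => /eqP/f_inj->.
  by have /setP/(_ p) := A1 f12 E1 E2; rewrite !inE pJ1 pJ2.
have edge_at p : chosen_feature p ->
    exists i q, chosen_feature q /\ link_joins (cs (f i)) p q.
  move=> chosen_p; have [i1 _ cr1] := crossed_twice p ord0 chosen_p.
  case: (crosses_cases cr1) => [[J1 E1 pJ1]|[q Hq]]; last by exists i1, q.
  have [i2 i21 cr2] := crossed_twice p i1 chosen_p.
  case: (crosses_cases cr2) => [[J2 E2 pJ2]|[q Hq]]; last by exists i2, q.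
  by case: (khot_once i2 i1 p J2 J1).
have other_edge_at p i0 : chosen_feature p ->
    (exists i q, [/\ i != i0, chosen_feature q & link_joins (cs (f i)) p q]) \/
    in_khot_union cs p.
  move=> chosen_p; have [i i0i cr] := crossed_twice p i0 chosen_p.
  case: (crosses_cases cr) => [[J E pJ]|[q [chosen_q pq]]]; last by left; exists i, q.
  by right; apply/existsP; exists (f i); rewrite E.
have [u0 [chosen_u0 khot_u0]] : exists u0, chosen_feature u0 /\
    (forall v, chosen_feature v -> in_khot_union cs v -> in_khot_union cs u0).
  case: (pickP (fun p => chosen_feature p && in_khot_union cs p)) => [u /andP[]|none].
    by exists u.
  exists (feat ord0); split=> [|v chosen_v khot_v]; first by apply/existsP; exists ord0.
  by move: (none v); rewrite chosen_v khot_v.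
have walk n : exists V E, simple_walk cs f chosen_feature n V E /\ V 0%N = u0.
  elim: n => [|n [V [E [W V0]]]].
    by exists (fun=> u0), (fun=> ord0); split=> //; split=> // a b; lia.
  have chosen_Vn : chosen_feature (V n) by case: W => _ _; apply.
  case: n W V0 chosen_Vn => [|n] W V0 chosen_Vn.
    have [i [q [chosen_q iq]]] := edge_at _ chosen_Vn.
    have [//|V' [E' [W' V'0]]] := simple_walk_extend f_inj A3 W iq chosen_q.
    by exists V', E'; rewrite V'0.
  case: (other_edge_at _ (E n) chosen_Vn) => [[i [q [iE chosen_q iq]]]|khot_Vn].
    have [_|V' [E' [W' V'0]]] := simple_walk_extend f_inj A3 W iq chosen_q.
      exact/eqP.
    by exists V', E'; rewrite V'0.
  have u0_Vn := A2 (khot_u0 _ chosen_Vn khot_Vn) khot_Vn.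
  have := simple_walk_connect W (leqnn _); rewrite V0 => /u0_Vn.
  by case: W => _ Vinj _; rewrite -V0 => /Vinj; lia.
have [V [E [W _]]] := walk d.
by have := simple_walk_size W; rewrite ltnn.
Qed.

Definition two_per_row := forall i c, exists2 c', c' != c & S i c' != 0.

Lemma leaf_row_inside p r0 i c c' : leaf p r0 -> i != r0 ->
  feat c = p -> S i c != 0 -> S i c' != 0 -> feat c' = p.
Proof.
move=> [_ no_cross] ir0 cp Sc Sc'; apply: NNPP => c'p.
by apply: (no_cross i ir0); split; [exists c | exists c'; split=> //; apply/eqP].
Qed.

Lemma feature_pair_entries i p cx ca : g cx = lshift d p -> g ca = rshift d p ->
  S i cx != 0 -> S i ca != 0 -> S i cx = S i ca.
Proof.
move=> gx ga; rewrite !submatrixE gx ga col_feature_lshift col_feature_rshift.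
by rewrite col_coef_lshift col_coef_rshift; apply: feature_coef_xa; apply: link_irrefl.
Qed.

(* Off [r0], a row meeting [x_p] or [a_p] meets both, since it has two nonzero
   entries and all of them in columns of feature [p]. *)
Lemma leaf_cols_agree p r0 cx ca : leaf p r0 -> two_per_row ->
  g cx = lshift d p -> g ca = rshift d p ->
  forall i, i != r0 -> S i ca = S i cx.
Proof.
move=> lf two gx ga i ir0.
have [fx fa] : feat cx = p /\ feat ca = p.
  by rewrite gx ga col_feature_lshift col_feature_rshift.
have only_pair c : feat c = p -> c = cx \/ c = ca.
  by case: (lrshift_col_feature (g c)) => gc cp; [left|right];
    apply: g_inj; rewrite gc cp ?gx ?ga.
have SxSa := feature_pair_entries (i := i) gx ga.
have partner c c' : feat c = p -> S i c != 0 -> c' != c -> S i c' != 0 ->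
    c' = cx \/ c' = ca by move=> cp Sc _ Sc'; apply/only_pair/(leaf_row_inside lf ir0 cp Sc Sc').
case: (boolP (S i cx != 0)) => [Sx|/negPn/eqP Sx0].
  have [c' c'x Sc'] := two i cx.
  case: (partner _ _ fx Sx c'x Sc') => ec'; first by rewrite ec' eqxx in c'x.
  by rewrite SxSa // -ec'.
case: (boolP (S i ca != 0)) => [Sa|/negPn/eqP -> //].
have [c' c'a Sc'] := two i ca.
case: (partner _ _ fa Sa c'a Sc') => ec'; last by rewrite ec' eqxx in c'a.
by rewrite ec' Sx0 eqxx in Sc'.
Qed.

Lemma leaf_col_zero p r0 c0 : leaf p r0 -> two_per_row ->
  (forall c, feat c = p -> c = c0) -> forall i, i != r0 -> S i c0 = 0.
Proof.
move=> lf two only_c0 i ir0; apply/eqP/negPn/negP => Sc0.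
have [c c0c Sc] := two i c0.
have fc0 : feat c0 = p.
  by case: lf => /existsP[c1 /eqP c1p] _; rewrite -c1p -(only_c0 c1 c1p).
by rewrite (only_c0 c (leaf_row_inside lf ir0 fc0 Sc0 Sc)) eqxx in c0c.
Qed.

Lemma two_feature_cols p c c' : c != c' -> feat c = p -> feat c' = p ->
  exists cx ca, g cx = lshift d p /\ g ca = rshift d p.
Proof.
move=> cc' <- fc'; case: (lrshift_col_feature (g c)) => gc;
  case: (lrshift_col_feature (g c')) => gc'; rewrite fc' in gc'.
- by move: cc'; rewrite (g_inj (etrans gc' (esym gc))) eqxx.
- by exists c, c'.
- by exists c', c.
- by move: cc'; rewrite (g_inj (etrans gc' (esym gc))) eqxx.
Qed.

Lemma det_leaf_zpm1 p r0 : leaf p r0 -> two_per_row ->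
  (forall i c, zpm1 (cofactor S i c)) -> zpm1 (\det S).
Proof.
move=> lf two cofactor_zpm1.
have entry_zpm1 i c : zpm1 (S i c) by rewrite submatrixE; apply: feature_coef_zpm1.
have [c0 fc0] : exists c0, feat c0 = p by case: lf => /existsP[c /eqP]; exists c.
case: (boolP [exists c, (feat c == p) && (c != c0)]).
  case/existsP=> c /andP[/eqP fc cc0].
  have [cx [ca [gx ga]]] := two_feature_cols cc0 fc fc0.
  have xa : cx != ca.
    by apply/eqP => exa; move: ga; rewrite -exa gx => /eqP; rewrite eq_lrshift.
  rewrite (expand_det_col_pair xa (leaf_cols_agree lf two gx ga)).
  apply: zpm1M (cofactor_zpm1 _ _); apply: zpm1B => //.
  exact: feature_pair_entries gx ga.
move=> only_c0; rewrite (expand_det_col1 (i0 := r0) (j0 := c0)); first exact: zpm1M.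
apply: leaf_col_zero lf two _ => c fc; apply/eqP/negPn/negP => cc0.
by case/negP: only_c0; apply/existsP; exists c; rewrite fc eqxx.
Qed.

Lemma det_submatrix_zpm1 :
  (forall (f' : 'I_k -> 'I_m) (g' : 'I_k -> 'I_(d + d)),
     injective f' -> injective g' -> zpm1 (\det (mxsub f' g' (constraint_matrix cs)))) ->
  zpm1 (\det S).
Proof.
move=> minors.
have cofactor_zpm1 i c : zpm1 (cofactor S i c).
  rewrite /cofactor minor_mxsub; apply: zpm1M; first exact: zpm1_sign.
  by apply: minors; apply: inj_comp => //; apply: lift_inj.
case: (boolP [exists i0, exists c0, [forall c, (c != c0) ==> (S i0 c == 0)]]).
  case/existsP=> i0 /existsP[c0 /forallP row0].
  rewrite (expand_det_row1 (i0 := i0) (j0 := c0)).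
    by apply: zpm1M; rewrite // submatrixE; apply: feature_coef_zpm1.
  by move=> c cc0; apply/eqP; move: (row0 c); rewrite cc0.
move=> no_row1; have [p [r0 lf]] := exists_leaf.
apply: det_leaf_zpm1 lf _ cofactor_zpm1 => i c0.
apply: NNPP => none; case/negP: no_row1; apply/existsP; exists i.
apply/existsP; exists c0; apply/forallP => c; apply/implyP => cc0.
by apply/negPn/negP => Sc; apply: none; exists c.
Qed.

End Submatrix.

Theorem mainTheorem1 (d m : nat) (cs : 'I_m -> lr_constraint d) :
  (0 < d)%N ->
  assumption_A1 cs -> assumption_A2 cs -> assumption_A3 cs ->
  totally_unimodular (constraint_matrix cs) /\
  (forall i j, constraint_matrix cs i j \in [:: 0; 1; -1]).
Proof.
move=> _ A1 A2 A3; split=> [k|i j]; last by rewrite constraint_matrixE; apply: feature_coef_zpm1.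
elim: k => [|k IH] f g f_inj g_inj; first by rewrite det_mx00 !inE.
by have := det_submatrix_zpm1 A1 A2 A3 f_inj g_inj; apply => f' g'; apply: IH.
Qed.
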